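(* If $T\in\mathcal{T}_3$ has $n\ge 30$ vertices then there is some internal vertex $v$ of $T$ with $|\mu(T)-\lambda(T,v)|<2$.
   Context: A leaf is a vertex of degree at most 1; an internal vertex has degree at least 2. $\mathcal{T}_3$ is the set of finite trees with at least one internal vertex in which every internal vertex has degree at least 3. A subtree is a nonempty vertex set inducing a connected subgraph. $\mu(T)$ is the average number of vertices over all subtrees of $T$, and $\lambda(T,v)$ is the average number of vertices over all subtrees of $T$ containing $v$. *)

From mathcomp Require Import all_boot all_order all_algebra.
Set Implicit Arguments. Unset Strict Implicit. Unset Printing Implicit Defensive.
Import Order.TTheory GRing.Theory Num.Theory.

Definition simple_graph (V : finType) (e : rel V) : Prop :=
  symmetric e /\ irreflexive e.

Definition induced (V : finType) (e : rel V) (S : {set V}) : rel V :=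
  fun x y => [&& x \in S, y \in S & e x y].

Definition connected_in (V : finType) (e : rel V) (S : {set V}) : bool :=
  [forall x in S, forall y in S, connect (induced e S) x y].

Definition edges (V : finType) (e : rel V) : {set {set V}} :=
  [set E : {set V} | [exists x, exists y, e x y && (E == [set x; y])]].

Definition is_tree (V : finType) (e : rel V) : Prop :=
  [/\ simple_graph e, 0 < #|V|, connected_in e [set: V]
    & #|edges e| = #|V| - 1]%N.

Definition deg (V : finType) (e : rel V) (x : V) : nat := #|[set y | e x y]|.

Definition internal (V : finType) (e : rel V) (x : V) : bool := (2 <= deg e x)%N.

Definition in_T3 (V : finType) (e : rel V) : Prop :=
  [/\ is_tree e, exists x, internal e x
    & forall x, internal e x -> (3 <= deg e x)%N].

Definition subtrees (V : finType) (e : rel V) : {set {set V}} :=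
  [set S : {set V} | (S != set0) && connected_in e S].

Local Open Scope ring_scope.

Definition mu (V : finType) (e : rel V) : rat :=
  (\sum_(S in subtrees e) #|S|)%:R / #|subtrees e|%:R.

Definition lambda (V : finType) (e : rel V) (v : V) : rat :=
  (\sum_(S in subtrees e | v \in S) #|S|)%:R /
  #|[set S in subtrees e | v \in S]|%:R.

(* Root the tree at an internal vertex r minimising the largest number of leaves that the
   deletion of another vertex cuts off from r; then every branch below r holds at most half
   of the L leaves.  Every subtree has a unique vertex closest to r, its top.  A subtree with
   top x != r extends in 2^(leaves outside the branch of x) different ways to a subtree
   containing r, so, with N_r subtrees containing r and I < L internal vertices, at most
   N_r (2L + (I - 1) 2^(L/2)) / 2^L subtrees avoid r.  For n = L + I >= 30 this is less than
   2 N_r / (n - 3), and since orders lie between 1 and n, averaging gives |mu - lambda| < 2. *)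

From mathcomp Require Import all_boot all_order all_algebra.
From mathcomp Require Import zify ring lra.
Set Implicit Arguments. Unset Strict Implicit. Unset Printing Implicit Defensive.
Import Order.TTheory GRing.Theory Num.Theory.

Lemma card_sum_indicator (T : finType) (A : {set T}) : #|A| = \sum_i (i \in A : nat).
Proof. by rewrite -sum1_card big_mkcond; apply: eq_bigr => i _; case: (i \in A). Qed.

Lemma card_sep_split (T : finType) (A : {set T}) (P : pred T) :
  #|[set x in A | P x]| + #|[set x in A | ~~ P x]| = #|A|.
Proof.
by rewrite -(cardsID [set x | P x] A); congr (_ + _); apply: eq_card => x; rewrite !inE andbC.
Qed.

Lemma connect_forward_closed (T : finType) (R : rel T) (B : {set T}) :
  (forall a b, R a b -> a \in B -> b \in B) ->
  forall x y, connect R x y -> x \in B -> y \in B.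
Proof.
move=> HB x y /connectP [p Hp ->]; elim: p x Hp => [//|a p IH] x /= /andP [Hxa Hp] Hx.
exact: IH Hp (HB _ _ Hxa Hx).
Qed.

Lemma induced_sym (T : finType) (e : rel T) (A : {set T}) :
  symmetric e -> symmetric (induced e A).
Proof. by move=> e_sym x y; rewrite /induced e_sym andbCA. Qed.

Lemma connected_inT (T : finType) (e : rel T) :
  connected_in e [set: T] -> forall x y, connect e x y.
Proof.
move=> /forallP conn x y; have /implyP/(_ (in_setT x))/forallP/(_ y) := conn x.
move=> /implyP/(_ (in_setT y)).
by rewrite (@eq_connect _ _ e) // => a b; rewrite /induced !in_setT.
Qed.

Lemma quadratic_lt_exp2 k : 8 <= k -> (4 * k - 4) * (20 * k - 16) < 16 * 2 ^ k.
Proof.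
elim: k => [//|k IH] Hk; case: (eqVneq k 7) => [->//|Hk7].
have Hk8 : 8 <= k by lia.
have := IH Hk8; rewrite expnS.
have -> : (4 * k.+1 - 4) * (20 * k.+1 - 16) = (4 * k) * (20 * k + 4) by lia.
move=> IHk; apply: leq_ltn_trans (_ : 2 * ((4 * k - 4) * (20 * k - 16)) < _); last by lia.
nia.
Qed.

(* Write 2^l = 2^M 2^(l-M): the factor 2^M absorbs the 2^M in the left side, and
   l - M >= l/2 >= 8 leaves a quadratic in l - M against an exponential. *)
Lemma count_lt_exp2 l i M : 16 <= l -> i < l -> 3 <= M -> M.*2 <= l ->
  (l + i - 3) * (2 * l + (i - 1) * 2 ^ M) < 2 * 2 ^ l.
Proof.
move=> Hl Hi HM H2M.
have -> : 2 ^ l = 2 ^ M * 2 ^ (l - M) by rewrite -expnD; congr (_ ^ _); lia.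
set k := l - M; have Hk : 8 <= k by rewrite /k; lia.
have Hlk : l <= 2 * k by rewrite /k; lia.
set a := 2 ^ M; have Ha : 8 <= a by rewrite /a (_ : 8 = 2 ^ 3) // leq_pexp2l.
have Hb := quadratic_lt_exp2 Hk.
have E1 : (l + i - 3) * (2 * l + (i - 1) * a) <= (2 * l - 4) * (2 * l + (l - 2) * a).
  by apply: leq_mul; [lia | rewrite leq_add2l leq_mul2r; apply/orP; right; lia].
have E2 : 8 * (2 * l + (l - 2) * a) <= a * (10 * l - 16).
  have -> : 8 * (2 * l + (l - 2) * a) = 16 * l + (8 * l - 16) * a.
    by rewrite mulnDr mulnA mulnBl; lia.
  have -> : a * (10 * l - 16) = 2 * l * a + (8 * l - 16) * a.
    by rewrite mulnC -mulnDl; congr (_ * _); lia.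
  by rewrite leq_add2r; nia.
have E3 : (2 * l - 4) * (10 * l - 16) <= (4 * k - 4) * (20 * k - 16) by apply: leq_mul; lia.
rewrite -(ltn_pmul2l (isT : 0 < 8)).
apply: leq_ltn_trans (_ : 8 * ((2 * l - 4) * (2 * l + (l - 2) * a)) < _).
  by rewrite leq_mul2l E1 orbT.
rewrite mulnCA; apply: leq_ltn_trans (_ : (2 * l - 4) * (a * (10 * l - 16)) < _).
  by rewrite leq_mul2l E2 orbT.
rewrite mulnCA; apply: leq_ltn_trans (_ : a * ((4 * k - 4) * (20 * k - 16)) < _).
  by rewrite leq_mul2l E3 orbT.
rewrite -(ltn_pmul2l (_ : 0 < a)) in Hb; last by lia.
by move: Hb; rewrite !mulnA; lia.
Qed.

Section Tree.
Variables (V : finType) (e : rel V).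
Hypothesis e_sym : symmetric e.
Hypothesis e_irr : irreflexive e.
Hypothesis e_conn : forall x y, connect e x y.
Hypothesis e_card : #|edges e| = #|V| - 1.

Definition leaves := [set z | ~~ internal e z].

Definition nleaves (A : {set V}) := #|A :&: leaves|.

(* The vertices that deleting w cuts off from u (w itself included). *)
Definition separated w u := [set y | ~~ connect (induced e [set~ w]) u y].

Definition max_branch_leaves u := \max_(w | w != u) nleaves (separated w u).

Lemma nleavesS (A B : {set V}) : A \subset B -> nleaves A <= nleaves B.
Proof. by move=> H; apply: subset_leq_card; apply: setSI. Qed.

Lemma nleaves_disjointU (A B C : {set V}) : [disjoint A & B] -> A :|: B \subset C ->
  nleaves A + nleaves B <= nleaves C.
Proof.
move=> Hd Hs; apply: leq_trans (nleavesS Hs); rewrite /nleaves setIUl cardsU.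
suff -> : (A :&: leaves) :&: (B :&: leaves) = set0 by rewrite cards0 subn0.
by apply/eqP; rewrite -subset0 -(disjoint_setI0 Hd) setISS // subsetIl.
Qed.

Lemma nleavesC (A : {set V}) : nleaves A + nleaves (~: A) = #|leaves|.
Proof. by rewrite /nleaves -cardsUI -setIUl setUCr setTI -setIIl setICr set0I cards0 addn0. Qed.

Section Rooted.
Variable r : V.

Fixpoint ball k : {set V} :=
  if k is k'.+1 then ball k' :|: [set y | [exists x in ball k', e x y]] else [set r].

Lemma ball_path p s k : s \in ball k -> path e s p -> last s p \in ball (k + size p).
Proof.
elim: p s k => [|a p IH] s k Hs /=; first by rewrite addn0.
case/andP=> Hsa Hp; rewrite addnS -addSn; apply: IH Hp.
by rewrite /= inE; apply/orP; right; rewrite inE; apply/existsP; exists s; rewrite Hs.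
Qed.

Lemma exists_ball x : exists k, x \in ball k.
Proof.
have /connectP [p Hp ->] := e_conn r x.
by exists (0 + size p); apply: ball_path Hp; rewrite /= inE.
Qed.

Definition depth x := ex_minn (exists_ball x).

Lemma depth_ball x : x \in ball (depth x).
Proof. by rewrite /depth; case: ex_minnP. Qed.

Lemma depth_min x k : x \in ball k -> depth x <= k.
Proof. by rewrite /depth; case: ex_minnP => m _ H /H. Qed.

Lemma depth_root : depth r = 0.
Proof. by apply/eqP; rewrite -leqn0; apply: depth_min; rewrite inE. Qed.

Lemma depth_eq0 x : depth x = 0 -> x = r.
Proof. by move=> H; have := depth_ball x; rewrite H inE => /eqP. Qed.

Lemma depth_edge x y : e x y -> depth y <= (depth x).+1.
Proof.
move=> Hxy; apply: depth_min; rewrite /= inE; apply/orP; right.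
by rewrite inE; apply/existsP; exists x; rewrite depth_ball.
Qed.

Lemma exists_parent x : x != r -> exists y, e y x && ((depth y).+1 == depth x).
Proof.
move=> Hx; case Hd: (depth x) => [|k]; first by rewrite (depth_eq0 Hd) eqxx in Hx.
have := depth_ball x; rewrite Hd /= inE => /orP [Hb|].
  by have := depth_min Hb; rewrite Hd ltnn.
rewrite inE => /existsP [y /andP [Hy Hyx]]; exists y; rewrite Hyx /=.
have := depth_min Hy; have := depth_edge Hyx; rewrite Hd.
by move=> *; apply/eqP; lia.
Qed.

Definition parent x :=
  if x == r then r else odflt r [pick y | e y x && ((depth y).+1 == depth x)].

Lemma parent_root : parent r = r.
Proof. by rewrite /parent eqxx. Qed.

Lemma parentP x : x != r -> e (parent x) x /\ (depth (parent x)).+1 = depth x.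
Proof.
move=> Hx; rewrite /parent (negbTE Hx).
case: pickP => [y /andP [H1 /eqP H2] //|H].
by have [y] := exists_parent Hx; rewrite H.
Qed.

Lemma edge_parent x : x != r -> e x (parent x).
Proof. by move=> /parentP [H _]; rewrite e_sym. Qed.

Lemma depth_parent x : x != r -> depth (parent x) < depth x.
Proof. by move=> /parentP [_ <-]. Qed.

(* The n - 1 edges {x, parent x} (x != r) are pairwise distinct, so they are all
   the edges of the tree. *)
Lemma parent_edges : [set [set x; parent x] | x in [set~ r]] = edges e.
Proof.
apply/eqP; rewrite eqEcard; apply/andP; split.
  apply/subsetP=> E /imsetP [z Hz ->]; rewrite inE; apply/existsP; exists (parent z).
  apply/existsP; exists z; rewrite !inE in Hz; have [-> _] := parentP Hz.
  by rewrite /= setUC.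
rewrite card_in_imset ?cardsC1 ?e_card ?subn1 // => a b; rewrite !inE => Ha Hb /setP Hab.
move: (Hab b); rewrite !inE !eqxx /= ?orbT; case/orP=> [/eqP -> //|/eqP Hb1].
move: (Hab a); rewrite !inE !eqxx /= ?orbT => /esym; case/orP=> [/eqP -> //|/eqP Ha1].
have [_ Ea] := parentP Ha; have [_ Eb] := parentP Hb.
by rewrite -Hb1 in Ea; rewrite -Ha1 in Eb; lia.
Qed.

Lemma edge_parentP x y : e x y ->
  ((y != r) && (x == parent y)) || ((x != r) && (y == parent x)).
Proof.
move=> Hxy; have : [set x; y] \in edges e.
  by rewrite inE; apply/existsP; exists x; apply/existsP; exists y; rewrite Hxy eqxx.
rewrite -parent_edges => /imsetP [z Hz /setP Hs]; rewrite !inE in Hz.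
have Hne : x != y by apply/eqP=> E; rewrite E e_irr in Hxy.
have := Hs x; have := Hs y; rewrite !inE !eqxx /= orbT.
move=> /esym /orP [] /eqP Ey /esym /orP [] /eqP Ex.
- by rewrite Ex Ey eqxx in Hne.
- by rewrite Ey Ex Hz eqxx.
- by rewrite Ex Ey Hz eqxx orbT.
- by rewrite Ex Ey eqxx in Hne.
Qed.

Lemma depth_iter_parent k y : depth (iter k parent y) = depth y - k.
Proof.
elim: k => [|k IH]; first by rewrite subn0.
rewrite iterS; case: (eqVneq (iter k parent y) r) => [E|Hn].
  by rewrite E parent_root depth_root; rewrite E depth_root in IH; lia.
by have [_ E] := parentP Hn; rewrite IH in E; lia.
Qed.

Definition anc x y := fconnect parent y x.

Definition desc x := [set y | anc x y].

Lemma ancP x y : reflect (exists k, iter k parent y = x) (anc x y).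
Proof.
apply: (iffP idP) => [H|[k <-]]; last exact: fconnect_iter.
by exists (findex parent y x); apply: iter_findex.
Qed.

Lemma anc_refl x : anc x x.
Proof. exact: connect0. Qed.

Lemma anc_parent y : anc (parent y) y.
Proof. exact: fconnect1. Qed.

Lemma anc_trans x y z : anc x y -> anc y z -> anc x z.
Proof. by move=> H1 H2; apply: connect_trans H2 H1. Qed.

Lemma anc_depth x y : anc x y -> depth x <= depth y.
Proof. by case/ancP=> k <-; rewrite depth_iter_parent leq_subr. Qed.

Lemma anc_depth_eq x y : anc x y -> depth x = depth y -> x = y.
Proof.
case/ancP=> [[|k] <-] //; rewrite depth_iter_parent => E.
have Hy : depth y = 0 by lia.
by rewrite (depth_eq0 Hy) iter_fix // parent_root.
Qed.

Lemma anc_antisym x y : anc x y -> anc y x -> x = y.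
Proof.
move=> H1 H2; apply: (anc_depth_eq H1); apply/eqP.
by rewrite eqn_leq (anc_depth H1) (anc_depth H2).
Qed.

Lemma anc_root y : anc r y.
Proof. by apply/ancP; exists (depth y); apply: depth_eq0; rewrite depth_iter_parent subnn. Qed.

Lemma anc_root_eq x : anc x r -> x = r.
Proof. by move=> H; apply: anc_antisym H (anc_root x). Qed.

Lemma anc_parent_neq x y : anc x y -> x != y -> anc x (parent y).
Proof.
case/ancP=> [[|k] <-]; first by rewrite eqxx.
by move=> _; apply/ancP; exists k; rewrite iterSr.
Qed.

Lemma anc_total x y z : anc x z -> anc y z -> anc x y || anc y x.
Proof.
case/ancP=> a <-; case/ancP=> b <-; case: (leqP a b) => H; apply/orP.
  by right; apply/ancP; exists (b - a); rewrite -iterD subnK.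
by left; apply/ancP; exists (a - b); rewrite -iterD subnK //; lia.
Qed.

Lemma anc_child x y : anc x y -> y != x -> exists c, [/\ c != r, parent c = x & anc c y].
Proof.
case/ancP=> k; elim: k => [|k IH] /=; first by move=> ->; rewrite eqxx.
move=> Hk Hyx; case: (eqVneq (iter k parent y) r) => [E|Hn].
  by apply: IH => //; rewrite -Hk E parent_root.
by exists (iter k parent y); split => //; apply: fconnect_iter.
Qed.

Lemma desc_root : desc r = setT.
Proof. by apply/setP=> y; rewrite !inE anc_root. Qed.

Lemma desc_disjoint a b : ~~ anc a b -> ~~ anc b a -> [disjoint desc a & desc b].
Proof.
move=> H1 H2; rewrite -setI_eq0; apply/eqP/setP=> z; rewrite !inE.
apply/negbTE/negP=> /andP [Ha Hb].
by case/orP: (anc_total Ha Hb) => H; [rewrite H in H1|rewrite H in H2].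
Qed.

(* Leaving desc y along an edge of S is only possible through parent y. *)
Lemma connected_parent_mem (S : {set V}) y t : connected_in e S ->
  y \in S -> t \in S -> ~~ anc y t -> (y != r) && (parent y \in S).
Proof.
move=> HS Hy Ht Hyt; apply/negPn/negP=> Hbad; move/negP: Hyt; apply.
have Hc : connect (induced e S) y t.
  by move/forallP/(_ y)/implyP/(_ Hy)/forallP/(_ t)/implyP/(_ Ht): HS.
have := @connect_forward_closed _ (induced e S) (desc y) _ y t Hc.
rewrite !inE anc_refl; apply=> // a b /and3P [Ha Hb Hab]; rewrite !inE => Hya.
case/orP: (edge_parentP Hab) => /andP [Hne /eqP E].
  by rewrite E in Hya; apply: anc_trans Hya (anc_parent b).
rewrite E; case: (eqVneq a y) => [Eay|Hay]; last by apply: anc_parent_neq Hya _; rewrite eq_sym.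
by subst a; rewrite Hne -E Hb in Hbad.
Qed.

Lemma parent_closed_connected (S : {set V}) t : t \in S ->
  (forall y, y \in S -> y != t -> (y != r) && (parent y \in S)) -> connected_in e S.
Proof.
move=> Ht HS.
have Hto k y : depth y <= k -> y \in S -> connect (induced e S) y t.
  elim: k y => [|k IH] y Hk Hy; case: (eqVneq y t) => [->|Hyt]; rewrite ?connect0 //.
    by have := HS y Hy Hyt; rewrite (depth_eq0 (_ : depth y = 0)) ?eqxx //; lia.
  case/andP: (HS y Hy Hyt) => Hr Hp.
  apply: connect_trans (IH _ _ Hp); last by have := depth_parent Hr; lia.
  by apply: connect1; rewrite /induced Hy Hp edge_parent.
apply/forallP=> x; apply/implyP=> Hx; apply/forallP=> z; apply/implyP=> Hz.
apply: connect_trans (Hto _ _ (leqnn _) Hx) _.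
by rewrite (sym_connect_sym (induced_sym S e_sym)) (Hto _ _ (leqnn _) Hz).
Qed.

Lemma connect_anc_path (A : {set V}) c y : anc c y ->
  (forall z, anc c z -> anc z y -> z \in A) -> connect (induced e A) c y.
Proof.
move: {2}(depth y) (leqnn (depth y)) => k; elim: k y => [|k IH] y Hk Hcy HA.
  have Ey : y = r by apply: depth_eq0; lia.
  by subst y; rewrite (anc_root_eq Hcy) connect0.
case: (eqVneq y c) => [->|Hyc]; first exact: connect0.
have Hyr : y != r by apply: contraNneq Hyc => E; subst y; rewrite (anc_root_eq Hcy).
have Hcp : anc c (parent y) by apply: anc_parent_neq Hcy _; rewrite eq_sym.
apply: connect_trans (IH (parent y) _ Hcp _) _.
- by have := depth_parent Hyr; lia.
- by move=> z H1 H2; apply: HA H1 (anc_trans H2 (anc_parent y)).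
apply: connect1; rewrite /induced (HA _ Hcp (anc_parent y)) (HA _ Hcy (anc_refl y)).
by have [-> _] := parentP Hyr.
Qed.

Lemma subtree_top_exists S : S \in subtrees e -> exists2 x, x \in S & S \subset desc x.
Proof.
rewrite inE => /andP [/set0Pn [z0 Hz0] HS].
case: (arg_minnP depth Hz0) => t Ht Hmin; exists t => //.
have Htop k y : depth y <= k -> y \in S -> anc t y.
  elim: k y => [|k IH] y Hk Hy; case: (boolP (anc y t)) => Hyt.
  - by rewrite (anc_depth_eq Hyt _) ?anc_refl //; apply/eqP; rewrite eqn_leq anc_depth ?Hmin.
  - by rewrite (depth_eq0 (_ : depth y = 0)) ?anc_root in Hyt; lia.
  - by rewrite (anc_depth_eq Hyt _) ?anc_refl //; apply/eqP; rewrite eqn_leq anc_depth ?Hmin.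
  - case/andP: (connected_parent_mem HS Hy Ht Hyt) => Hr Hp.
    by apply: anc_trans (IH _ _ Hp) (anc_parent y); have := depth_parent Hr; lia.
by apply/subsetP=> y Hy; rewrite inE; apply: Htop _ _ (leqnn _) Hy.
Qed.

Lemma subtree_top_unique (S : {set V}) x y : x \in S -> S \subset desc x ->
  y \in S -> S \subset desc y -> x = y.
Proof.
move=> Hx /subsetP Hsx Hy /subsetP Hsy.
by apply: anc_antisym; [have := Hsx y Hy | have := Hsy x Hx]; rewrite inE.
Qed.

Definition top_subtrees x := [set S in subtrees e | (x \in S) && (S \subset desc x)].

Lemma card_subtrees_top : #|subtrees e| = \sum_x #|top_subtrees x|.
Proof.
rewrite card_sum_indicator.
rewrite (eq_bigr (fun x => \sum_S (S \in top_subtrees x : nat))); last first.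
  by move=> x _; rewrite card_sum_indicator.
rewrite exchange_big; apply: eq_bigr => S _.
case: (boolP (S \in subtrees e)) => HS; last first.
  by rewrite big1 // => x _; rewrite inE (negbTE HS).
have [t Ht Hst] := subtree_top_exists HS.
rewrite (bigD1 t) //= inE HS Ht Hst big1 // => x Hxt.
rewrite inE HS /=; case: (boolP (_ && _)) => // /andP [Hx Hsx].
by rewrite (subtree_top_unique Hx Hsx Ht Hst) eqxx in Hxt.
Qed.

Lemma top_subtrees_root : top_subtrees r = [set S in subtrees e | r \in S].
Proof. by apply/setP=> S; rewrite !inE desc_root subsetT andbT. Qed.

Lemma top_subtrees_root_gt0 : 0 < #|top_subtrees r|.
Proof.
apply/card_gt0P; exists setT; rewrite top_subtrees_root !inE andbT.
apply/andP; split; first by apply/set0Pn; exists r.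
by apply: (@parent_closed_connected _ r) => // y _ Hy; rewrite Hy in_setT.
Qed.

Lemma top_subtrees_parent x S z : S \in top_subtrees x -> z \in S -> z != x ->
  (z != r) && (parent z \in S).
Proof.
rewrite !inE => /andP [/andP [_ HS] /andP [Hx /subsetP Hsx]] Hz Hzx.
apply: (connected_parent_mem HS Hz Hx); apply: contra Hzx => Hzx.
by have := Hsx z Hz; rewrite inE => /(anc_antisym Hzx) ->.
Qed.

Definition children x := [set y | (y != r) && (parent y == x)].

Lemma children_anc x y : y \in children x -> anc x y.
Proof. by rewrite inE => /andP [_ /eqP <-]; apply: anc_parent. Qed.

Lemma depth_child x y : y \in children x -> depth y = (depth x).+1.
Proof. by rewrite inE => /andP [Hy /eqP <-]; have [_ ->] := parentP Hy. Qed.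

Lemma deg_le_children x : deg e x <= #|children x| + 1.
Proof.
have : [set y | e x y] \subset children x :|: [set parent x].
  apply/subsetP=> y; rewrite !inE => Hxy.
  by case/orP: (edge_parentP Hxy) => /andP [H1 /eqP H2]; rewrite ?H1 ?H2 eqxx ?orbT.
by move/subset_leq_card/leq_trans; apply; rewrite cardsU cards1; lia.
Qed.

Lemma desc_leaf z : z \in leaves -> z != r -> desc z = [set z].
Proof.
rewrite inE /internal -ltnNge => Hdeg Hzr.
apply/setP=> y; rewrite !inE; apply/idP/idP => [Hzy|/eqP ->]; last exact: anc_refl.
apply/negPn/negP=> Hyz; have [c [Hc Ec Hcy]] := anc_child Hzy Hyz.
have Hcp : c != parent z.
  apply/eqP=> E; have := depth_parent Hc; have := depth_parent Hzr; rewrite -E Ec; lia.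
have : [set c; parent z] \subset [set y | e z y].
  apply/subsetP=> w; rewrite !inE => /orP [] /eqP ->; last exact: edge_parent.
  by rewrite -Ec; have [] := parentP Hc.
by move/subset_leq_card; rewrite cards2 Hcp; move: Hdeg; rewrite /deg; lia.
Qed.

Lemma exists_leaf_desc x : exists2 z, z \in desc x & z \in leaves.
Proof.
have Hx : x \in desc x by rewrite inE anc_refl.
case: (arg_maxnP depth Hx) => z Hz Hmax; exists z => //.
apply/negPn/negP; rewrite inE negbK /internal => Hdeg.
have /card_gt0P [y Hy] : 0 < #|children z| by have := deg_le_children z; lia.
have Hyd : y \in desc x.
  by move: (Hz : z \in desc x); rewrite !inE => /anc_trans; apply; apply: children_anc.
by have := Hmax _ Hyd; rewrite /= (depth_child Hy); lia.
Qed.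

Definition ancestors (Y : {set V}) := [set z | [exists y in Y, anc z y]].

(* Glue to a subtree with top x the paths from the root to x and to the leaves of X. *)
Definition extend x (S X : {set V}) := S :|: ancestors (x |: X).

Lemma extend_top_subtrees x (S X : {set V}) : x != r -> S \in top_subtrees x ->
  extend x S X \in top_subtrees r.
Proof.
move=> Hxr HS; have := HS; rewrite inE => /and3P [HSs HxS HSx].
have HrF : r \in extend x S X.
  by rewrite !inE; apply/orP; right; apply/existsP; exists x; rewrite !inE eqxx anc_root.
rewrite top_subtrees_root inE HrF andbT inE; apply/andP; split.
  by apply/set0Pn; exists x; rewrite inE HxS.
apply: (@parent_closed_connected _ r) => // z.
rewrite !inE => /orP [Hz|/existsP [y /andP [Hy Hzy]]] Hzr; rewrite Hzr /=.
  case: (eqVneq z x) => [Ezx|Hzx].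
    by subst z; apply/orP; right; apply/existsP; exists x; rewrite !inE eqxx anc_parent.
  by case/andP: (top_subtrees_parent HS Hz Hzx) => _ ->.
by apply/orP; right; apply/existsP; exists y; rewrite Hy (anc_trans (anc_parent z) Hzy).
Qed.

Lemma extend_desc x (S X : {set V}) : S \in top_subtrees x -> X \subset leaves :\: desc x ->
  extend x S X :&: desc x = S.
Proof.
rewrite inE => /and3P [_ HxS /subsetP HSx] /subsetP HX; apply/setP=> z; rewrite !inE.
apply/idP/idP => [/andP [/orP [//|/existsP [y /andP [Hy Hzy]]] Hxz] | Hz].
  move: Hy; rewrite !inE => /orP [/eqP Ey|HyX].
    by subst y; rewrite (anc_antisym Hzy Hxz).
  by have := HX y HyX; rewrite !inE (anc_trans Hxz Hzy).
by rewrite Hz /=; have := HSx z Hz; rewrite inE.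
Qed.

Lemma extend_leaves x (S X : {set V}) : r \notin leaves -> S \in top_subtrees x ->
  X \subset leaves :\: desc x -> (extend x S X :&: leaves) :\: desc x = X.
Proof.
move=> HrL; rewrite inE => /and3P [_ _ /subsetP HSx] /subsetP HX.
apply/setP=> z; rewrite /extend !inE.
apply/idP/idP => [|Hz]; last first.
  have := HX z Hz; rewrite !inE => /andP [-> ->]; rewrite andbT /=.
  by apply/orP; right; apply/existsP; exists z; rewrite !inE Hz orbT anc_refl.
case/andP=> Hzd /andP [/orP [Hz|/existsP [y /andP [Hy Hzy]]] HzL].
  by have := HSx z Hz; rewrite inE => H; rewrite H in Hzd.
have Hzr : z != r by apply: contraNneq HrL => <-; rewrite inE.
have Lz : z \in leaves by rewrite inE.
move: Hzy; have := desc_leaf Lz Hzr => /setP/(_ y); rewrite !inE => -> /eqP Eyz.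
subst y; move: Hy; rewrite !inE => /orP [/eqP Ezx|//].
by subst z; rewrite anc_refl in Hzd.
Qed.

(* Different pairs (S, X) give different extensions, as both are recovered from it. *)
Lemma card_top_subtrees_mul x : x != r -> r \notin leaves ->
  #|top_subtrees x| * 2 ^ #|leaves :\: desc x| <= #|top_subtrees r|.
Proof.
move=> Hxr HrL; pose F (p : {set V} * {set V}) := extend x p.1 p.2.
pose Dom := setX (top_subtrees x) (powerset (leaves :\: desc x)).
have Finj : {in Dom &, injective F}.
  move=> [S X] [S' X']; rewrite /Dom !in_setX !powersetE /F /= => /andP [HS HX] /andP [HS' HX'] E.
  congr pair; first by rewrite -(extend_desc HS HX) E extend_desc.
  by rewrite -(extend_leaves HrL HS HX) E extend_leaves.
rewrite -card_powerset -cardsX -/Dom -(card_in_imset Finj); apply: subset_leq_card.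
apply/subsetP=> _ /imsetP [[S X] + ->]; rewrite in_setX => /andP [HS _].
exact: extend_top_subtrees.
Qed.

Lemma desc_sub_separated w : w != r -> desc w \subset separated w r.
Proof.
move=> Hwr; apply/subsetP=> y; rewrite !inE => Hwy; apply/negP=> Hc.
have Hcl a b : induced e [set~ w] a b -> a \in ~: desc w -> b \in ~: desc w.
  move=> /and3P [Ha Hb Hab]; rewrite !inE in Ha Hb *; apply: contra => Hwb.
  case/orP: (edge_parentP Hab) => /andP [_ /eqP E].
    by rewrite E; apply: anc_parent_neq Hwb _; rewrite eq_sym.
  by rewrite E in Hwb; apply: anc_trans Hwb (anc_parent a).
have Hr : r \in ~: desc w by rewrite !inE; apply: contra Hwr => /anc_root_eq ->.
by have := connect_forward_closed Hcl Hc Hr; rewrite !inE Hwy.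
Qed.

(* Both u and y are joined to the root along ancestor paths, which avoid w. *)
Lemma separated_sub_desc w u : ~~ anc w u -> separated w u \subset desc w.
Proof.
move=> Hwu; apply/subsetP=> y; rewrite !inE; apply: contraR => Hwy.
have root_path z : ~~ anc w z -> connect (induced e [set~ w]) r z.
  move=> Hwz; apply: connect_anc_path (anc_root z) _ => t _ Htz; rewrite !inE.
  by apply: contraNneq Hwz => <-.
apply: connect_trans (root_path _ Hwy).
by rewrite (sym_connect_sym (induced_sym _ e_sym)) root_path.
Qed.

Lemma separated_root w : w != r -> separated w r = desc w.
Proof.
move=> Hwr; apply/eqP; rewrite eqEsubset desc_sub_separated // separated_sub_desc //.
by apply: contra Hwr => /anc_root_eq ->.
Qed.

Lemma separated_root_sub c : c != r -> separated r c \subset ~: desc c.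
Proof.
move=> Hcr; apply/subsetP=> y; rewrite !inE; apply: contra => Hcy.
apply: connect_anc_path Hcy _ => z Hcz _; rewrite !inE.
by apply: contraNneq Hcr => Ez; rewrite -(anc_root_eq (_ : anc c r)) // -Ez.
Qed.

Lemma sum_card_children : \sum_x #|children x| = #|V|.-1.
Proof.
rewrite (eq_bigr (fun x => \sum_y (y \in children x : nat))); last first.
  by move=> x _; rewrite card_sum_indicator.
rewrite exchange_big -(cardsC1 r) card_sum_indicator; apply: eq_bigr => y _.
rewrite !inE; case: (eqVneq y r) => [Ey|Hy] /=.
  by rewrite big1 // => x _; rewrite inE Ey eqxx.
rewrite (bigD1 (parent y)) //= inE Hy eqxx big1 // => x /negbTE Hx.
by rewrite inE Hy /= eq_sym Hx.
Qed.

Hypothesis deg_ge3 : forall x, internal e x -> 3 <= deg e x.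
Hypothesis r_internal : internal e r.

Lemma root_notin_leaves : r \notin leaves.
Proof. by rewrite inE r_internal. Qed.

(* Every internal vertex has at least two children. *)
Lemma double_card_internal_lt : (#|~: leaves|).*2 < #|V|.
Proof.
have Hge : \sum_(x in ~: leaves) 2 <= \sum_(x in ~: leaves) #|children x|.
  apply: leq_sum => x; rewrite !inE negbK => Hx.
  by have := deg_ge3 Hx; have := deg_le_children x; lia.
have : \sum_(x in ~: leaves) #|children x| <= \sum_x #|children x|.
  by rewrite [X in _ <= X](bigID (mem (~: leaves))) leq_addr.
rewrite sum_card_children sum_nat_const in Hge *.
have : 0 < #|V| by apply/card_gt0P; exists r.
lia.
Qed.

Lemma card_internal_lt_leaves : #|~: leaves| < #|leaves|.
Proof. by have := double_card_internal_lt; rewrite -(cardsC leaves); lia. Qed.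

Lemma nleaves_desc_le_max x : x != r -> nleaves (desc x) <= max_branch_leaves r.
Proof.
move=> Hxr; rewrite -separated_root //.
exact: (@leq_bigmax_cond _ (fun w => w != r) (fun w => nleaves (separated w r))).
Qed.

(* A sibling subtree of the branch containing w contributes at least one more leaf. *)
Lemma nleaves_proper_desc_lt c w : internal e c -> anc c w -> w != c ->
  nleaves (desc w) < nleaves (desc c).
Proof.
move=> Hci Hcw Hwc; have [c1 [Hc1r Hpc1 Hc1w]] := anc_child Hcw Hwc.
have Hc1 : c1 \in children c by rewrite inE Hc1r Hpc1 eqxx.
have : 0 < #|children c :\ c1|.
  by have := deg_ge3 Hci; have := deg_le_children c; rewrite (cardsD1 c1) Hc1; lia.
case/card_gt0P=> c2; rewrite !inE => /andP [Hc21 /andP [Hc2r /eqP Hpc2]].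
have Hc2 : c2 \in children c by rewrite inE Hc2r Hpc2 eqxx.
have Hdeq : depth c1 = depth c2 by rewrite (depth_child Hc1) (depth_child Hc2).
have Hd : [disjoint desc w & desc c2].
  apply: desc_disjoint; apply/negP=> H.
    by rewrite (anc_depth_eq (anc_trans Hc1w H) Hdeq) eqxx in Hc21.
  case/orP: (anc_total H Hc1w) => /anc_depth_eq E.
    by rewrite E ?eqxx in Hc21.
  by rewrite E ?eqxx in Hc21.
have Hsub : desc w :|: desc c2 \subset desc c.
  apply/subsetP=> z; rewrite !inE => /orP [] Hz; first exact: anc_trans Hcw Hz.
  exact: anc_trans (children_anc Hc2) Hz.
have [z Hz2 HzL] := exists_leaf_desc c2.
have : 0 < nleaves (desc c2) by apply/card_gt0P; exists z; rewrite inE Hz2 HzL.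
by have := nleaves_disjointU Hd Hsub; lia.
Qed.

(* If the branch at the child c of r holds more than half of the leaves, then moving
   the centre from r to c strictly lowers the largest branch. *)
Lemma max_branch_leaves_child_lt c : c != r -> parent c = r -> internal e c ->
  #|leaves| < (nleaves (desc c)).*2 -> max_branch_leaves c < nleaves (desc c).
Proof.
move=> Hcr Hpc Hci Hbig.
have Hcompl : nleaves (~: desc c) < nleaves (desc c) by have := nleavesC (desc c); lia.
suff Hsep w : w != c -> nleaves (separated w c) < nleaves (desc c).
  have Hpos : 0 < nleaves (desc c) by lia.
  suff : max_branch_leaves c <= (nleaves (desc c)).-1 by lia.
  by apply/bigmax_leqP => w /Hsep; lia.
move=> Hwc; case: (eqVneq w r) => [->|Hwr].
  by apply: leq_ltn_trans Hcompl; apply: nleavesS; apply: separated_root_sub.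
have Hwc' : ~~ anc w c.
  apply: contra Hwr => H; have := anc_parent_neq H Hwc; rewrite Hpc.
  by move=> /anc_root_eq ->.
apply: leq_ltn_trans (nleavesS (separated_sub_desc Hwc')) _.
have [Hcw|Hcw] := boolP (anc c w); first exact: nleaves_proper_desc_lt.
apply: leq_ltn_trans Hcompl; apply: nleavesS.
by rewrite -disjoints_subset; apply: desc_disjoint.
Qed.

Hypothesis r_min : forall u, internal e u -> max_branch_leaves r <= max_branch_leaves u.

Lemma leaf_centroid : (max_branch_leaves r).*2 <= #|leaves|.
Proof.
rewrite leqNgt; apply/negP=> Hbig.
have [w Hwr Hw] : exists2 w, w != r & #|leaves| < (nleaves (desc w)).*2.
  apply/exists_inP; apply: contraLR Hbig; rewrite negb_exists_in -leqNgt => /forall_inP Hall.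
  suff : max_branch_leaves r <= #|leaves| %/ 2 by lia.
  by apply/bigmax_leqP => x Hx; rewrite separated_root //; have := Hall x Hx; lia.
have [c [Hcr Hpc Hcw]] := anc_child (anc_root w) Hwr.
have Hlc : #|leaves| < (nleaves (desc c)).*2.
  apply: leq_trans Hw _; rewrite leq_double; apply: nleavesS.
  by apply/subsetP=> z; rewrite !inE; apply: anc_trans Hcw.
have Hci : internal e c.
  apply: contraLR Hlc => Hc; rewrite -leqNgt.
  have Lc : c \in leaves by rewrite inE.
  have : nleaves (desc c) <= 1 by rewrite /nleaves desc_leaf // -(cards1 c) subset_leq_card ?subsetIl.
  have : 0 < #|~: leaves| by apply/card_gt0P; exists r; rewrite inE root_notin_leaves.
  by have := card_internal_lt_leaves; lia.
have := r_min Hci; have := nleaves_desc_le_max Hcr.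
by have := max_branch_leaves_child_lt Hcr Hpc Hci Hlc; lia.
Qed.

Lemma card_top_subtrees_le x : x != r ->
  #|top_subtrees x| * 2 ^ #|leaves| <= #|top_subtrees r| * 2 ^ nleaves (desc x).
Proof.
move=> Hx; have H := card_top_subtrees_mul Hx root_notin_leaves.
rewrite -(cardsID (desc x) leaves) expnD /nleaves setIC mulnCA mulnA.
by rewrite -mulnA [X in _ <= X]mulnC leq_mul2l H orbT.
Qed.

(* A leaf below x != r is x itself; an internal x != r sees at most max_branch_leaves r leaves below. *)
Lemma sum_exp2_nleaves_desc : \sum_(x | x != r) 2 ^ nleaves (desc x) <=
  2 * #|leaves| + (#|~: leaves| - 1) * 2 ^ maxn (max_branch_leaves r) 3.
Proof.
have HrL := root_notin_leaves.
rewrite (bigID (mem leaves)) /=; apply: leq_add.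
  rewrite (eq_bigl (mem leaves)) => [|x /=]; last first.
    by case: (boolP (x \in leaves)) => Hx; rewrite ?andbF ?andbT //; apply: contraNneq HrL => <-.
  rewrite mulnC -sum_nat_const; apply: leq_sum => x Hx.
  have Hxr : x != r by apply: contraNneq HrL => <-.
  rewrite /nleaves (desc_leaf Hx Hxr) (_ : 2 = 2 ^ 1) // leq_pexp2l //.
  by rewrite -(cards1 x) subset_leq_card ?subsetIl.
rewrite (eq_bigl (mem (~: leaves :\ r))) => [|x]; last by rewrite !inE andbC.
apply: leq_trans (_ : \sum_(x in ~: leaves :\ r) 2 ^ maxn (max_branch_leaves r) 3 <= _).
  apply: leq_sum => x; rewrite !inE => /andP [Hxr _].
  by rewrite leq_pexp2l //; apply: leq_trans (nleaves_desc_le_max Hxr) (leq_maxl _ _).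
rewrite sum_nat_const (cardsD1 r (~: leaves)) inE HrL.
by rewrite add1n subn1.
Qed.

Lemma card_subtrees_notin_root :
  #|[set S in subtrees e | r \notin S]| = \sum_(x | x != r) #|top_subtrees x|.
Proof.
have := card_subtrees_top; rewrite (bigD1 r) //= top_subtrees_root.
by rewrite -(card_sep_split _ (fun S : {set V} => r \in S)) => /addnI.
Qed.

Lemma card_subtrees_notin_root_lt : 30 <= #|V| ->
  (#|V| - 3) * #|[set S in subtrees e | r \notin S]| < 2 * #|top_subtrees r|.
Proof.
move=> H30; set L := #|leaves|; set I := #|~: leaves|; set Nr := #|top_subtrees r|.
set M := maxn (max_branch_leaves r) 3.
have HnLI : #|V| = L + I by rewrite /L /I cardsC.
have HIL : I < L := card_internal_lt_leaves.
have HL : 16 <= L by have := double_card_internal_lt; rewrite -/I; lia.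
have HM2 : M.*2 <= L by have := leaf_centroid; rewrite /M; case: (leqP (max_branch_leaves r) 3); lia.
have Hsum : (\sum_(x | x != r) #|top_subtrees x|) * 2 ^ L <= Nr * (2 * L + (I - 1) * 2 ^ M).
  rewrite big_distrl /=; apply: leq_trans (_ : \sum_(x | x != r) Nr * 2 ^ nleaves (desc x) <= _).
    by apply: leq_sum => x Hx; apply: card_top_subtrees_le.
  by rewrite -big_distrr leq_mul2l sum_exp2_nleaves_desc orbT.
have Hnum := count_lt_exp2 HL HIL (leq_maxr _ _) HM2.
rewrite card_subtrees_notin_root -(ltn_pmul2r (expn_gt0 2 L)) -mulnA mulnCA HnLI.
apply: leq_ltn_trans (_ : (L + I - 3) * (Nr * (2 * L + (I - 1) * 2 ^ M)) < _).
  by rewrite mulnCA leq_mul2l Hsum orbT.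
by rewrite mulnCA (mulnC 2 Nr) -mulnA ltn_pmul2l // top_subtrees_root_gt0.
Qed.

End Rooted.
End Tree.

Lemma pooled_mean_gap_nat (p q a b n : nat) : 0 < p -> p <= a <= n * p ->
  q <= b <= (n - 1) * q -> (n - 3) * q < 2 * p -> 3 <= n ->
  (a * q < b * p + 2 * ((p + q) * p)) /\ (b * p < a * q + 2 * ((p + q) * p)).
Proof.
move=> Hp /andP [Hpa Han] /andP [Hqb Hbn] Hq Hn.
have K1 : n * q * p < q * p + 2 * ((p + q) * p).
  by rewrite mulnA -mulnDl ltn_pmul2r //; nia.
have K2 : (n - 1) * q * p < p * q + 2 * ((p + q) * p).
  by rewrite (mulnC p q) mulnA -mulnDl ltn_pmul2r //; nia.
split.
- apply: leq_ltn_trans (_ : n * p * q < _); first by rewrite leq_mul2r Han orbT.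
  apply: leq_trans (_ : q * p + 2 * ((p + q) * p) <= _); last by rewrite leq_add2r leq_mul2r Hqb orbT.
  by rewrite mulnAC.
- apply: leq_ltn_trans (_ : (n - 1) * q * p < _); first by rewrite leq_mul2r Hbn orbT.
  by apply: leq_trans K2 _; rewrite leq_add2r leq_mul2r Hpa orbT.
Qed.

Local Open Scope ring_scope.

Lemma pooled_mean_gap_lt2 (p q a b n : nat) : (0 < p)%N -> (p <= a <= n * p)%N ->
  (q <= b <= (n - 1) * q)%N -> ((n - 3) * q < 2 * p)%N -> (3 <= n)%N ->
  `|(a + b)%N%:R / (p + q)%N%:R - a%:R / p%:R : rat| < 2.
Proof.
move=> Hp Ha Hb Hq Hn; have [N1 N2] := pooled_mean_gap_nat Hp Ha Hb Hq Hn.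
have Hp' : (0 : rat) < p%:R by rewrite ltr0n.
have Hd : (0 : rat) < ((p + q) * p)%N%:R by rewrite ltr0n muln_gt0 Hp addn_gt0 Hp.
have -> : ((a + b)%N%:R / (p + q)%N%:R - a%:R / p%:R : rat) =
    ((b * p)%N%:R - (a * q)%N%:R) / ((p + q) * p)%N%:R.
  rewrite !natrM !natrD; field.
  by rewrite -natrD !pnatr_eq0 -!lt0n addn_gt0 Hp.
rewrite ltr_norml ltr_pdivrMr // ltr_pdivlMr //.
move: N1 N2 Hd; rewrite -!(ltr_nat rat) !natrD !natrM => N1 N2 Hd.
by apply/andP; split; lra.
Qed.

Lemma sum_card_ge (T : finType) (A : {set {set T}}) (P : pred {set T}) :
  (forall S, S \in A -> P S -> S != set0) -> (#|[set S in A | P S]| <= \sum_(S in A | P S) #|S|)%N.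
Proof.
move=> H; rewrite -sum1_card; apply: (@leq_trans (\sum_(S in A | P S) 1)%N).
  by rewrite (eq_bigl (fun S => (S \in A) && P S)) // => S; rewrite !inE.
by apply: leq_sum => S /andP [HA HP]; rewrite card_gt0 H.
Qed.

Lemma sum_card_le (T : finType) (A : {set {set T}}) (P : pred {set T}) m :
  (forall S, S \in A -> P S -> #|S| <= m)%N ->
  (\sum_(S in A | P S) #|S| <= m * #|[set S in A | P S]|)%N.
Proof.
move=> H; rewrite mulnC -sum_nat_const.
rewrite [X in (_ <= X)%N](eq_bigl (fun S => (S \in A) && P S)) => [|S]; last by rewrite !inE.
by apply: leq_sum => S /andP [HA HP]; apply: H.
Qed.

Lemma mean_card_gap_lt2 (T : finType) (A : {set {set T}}) (v : T) :
  set0 \notin A -> (3 <= #|T|)%N -> (0 < #|[set S in A | v \in S]|)%N ->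
  ((#|T| - 3) * #|[set S in A | v \notin S]| < 2 * #|[set S in A | v \in S]|)%N ->
  `|(\sum_(S in A) #|S|)%:R / #|A|%:R
    - (\sum_(S in A | v \in S) #|S|)%:R / #|[set S in A | v \in S]|%:R : rat| < 2.
Proof.
move=> HA0 Hn Hp Hq.
rewrite -(card_sep_split A (fun S => v \in S)) (bigID (fun S : {set T} => v \in S)) /=.
apply: pooled_mean_gap_lt2 Hp _ _ Hq Hn; apply/andP; split.
- by apply: sum_card_ge => S _; apply: contraTneq => ->; rewrite inE.
- by apply: sum_card_le => S _ _; apply: max_card.
- by apply: sum_card_ge => S HS _; apply: contraNneq HA0 => <-.
- apply: sum_card_le => S _ HvS; rewrite subn1 -(cardsC1 v) subset_leq_card //.
  by apply/subsetP=> z Hz; rewrite !inE; apply: contraNneq HvS => <-.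
Qed.

Theorem mainTheorem11 (V : finType) (e : rel V) :
  in_T3 e -> (30 <= #|V|)%N ->
  exists v : V, internal e v && (`|mu e - lambda e v| < 2).
Proof.
case=> [[[e_sym e_irr] _ /connected_inT e_conn e_card] [u Hu] deg_ge3] H30.
pose v := [arg min_(w < u | internal e w) max_branch_leaves e w].
have [Hv v_min] : internal e v /\ forall w, internal e w ->
    (max_branch_leaves e v <= max_branch_leaves e w)%N.
  by rewrite /v; case: arg_minnP.
exists v; rewrite Hv; apply: mean_card_gap_lt2.
- by rewrite inE eqxx.
- exact: leq_trans H30.
- by rewrite -top_subtrees_root ?top_subtrees_root_gt0.
- by rewrite -top_subtrees_root ?card_subtrees_notin_root_lt.
Qed.
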